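(* Let $k$ be an odd positive integer, $s>0$ an integer and $t$ an integer. Then $$\eta_{k}(t;s)=\frac{1}{2}\sum_{j=0}^{k-1}(-1)^{j}\,\eta_{k}(t-js;s+1).$$
   Context: For positive integers $k,s$ and integer $t$, $\eta_{k}(t;s)=\frac{1}{k}\sum_{j=0}^{k-1}(1+\alpha^{j})(1+\alpha^{2j})\cdots (1+\alpha^{(s-1)j})\,\alpha^{-jt}$, where $\alpha=e^{2\pi i/k}$ (the empty product for $s=1$ equals $1$). *)

From HB Require Import structures.
From mathcomp Require Import all_boot all_order all_algebra.
From mathcomp Require Import reals trigo.
From mathcomp Require Import complex.
Set Implicit Arguments. Unset Strict Implicit. Unset Printing Implicit Defensive.
Import Order.TTheory GRing.Theory Num.Theory.
Local Open Scope ring_scope.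
Local Open Scope complex_scope.

Definition alpha (R : realType) (k : nat) : R[i] :=
  (cos (2 * pi / k%:R)) +i* (sin (2 * pi / k%:R)).

Definition etak (R : realType) (k : nat) (t : int) (s : nat) : R[i] :=
  (k%:R)^-1 * \sum_(j < k)
     ((\prod_(1 <= m < s) (1 + alpha R k ^+ (m * j))) * alpha R k ^ (- (j%:Z * t))).

(* eta_k(t;s) is the average over the k-th roots of unity x = alpha^l of
   P_s(x) x^-t, with P_s(x) = (1 + x)...(1 + x^(s-1)).  Replacing t by t - js
   multiplies such a term by y^j, where y = x^s, and P_(s+1) = P_s (1 + y).
   Since y is again a k-th root of unity and k is odd, the alternating
   geometric sum gives (1 + y) * sum_(j<k) (-y)^j = 1 - (-y)^k = 1 + y^k = 2,
   so the alternating sum over j is twice the term of eta_k(t;s), for each l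
   separately. *)
From HB Require Import structures.
From mathcomp Require Import all_boot all_order all_algebra.
From mathcomp Require Import reals trigo.
From mathcomp Require Import complex.
From mathcomp Require Import ring.

Set Implicit Arguments.
Unset Strict Implicit.
Unset Printing Implicit Defensive.

Import Order.TTheory GRing.Theory Num.Theory.
Local Open Scope ring_scope.
Local Open Scope complex_scope.

Lemma alt_geom_sum_root1 (R : comPzRingType) (x : R) (k : nat) :
  odd k -> x ^+ k = 1 -> (1 + x) * \sum_(j < k) (-1) ^+ j * x ^+ j = 2.
Proof.
move=> k_odd xk1.
have := subrXX 1 (- x) k.
rewrite expr1n exprNn -signr_odd k_odd expr1 xk1 mulN1r opprK => two.
rewrite -[2]/(1 + 1) two opprK; congr (_ * _); apply: eq_bigr => j _.
by rewrite expr1n mul1r [RHS]exprNn.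
Qed.

Section AlternatingSumOfTerms.
Variables (R : comUnitRingType) (a : R) (k : nat).
Hypotheses (k_odd : odd k) (ak1 : a ^+ k = 1).

Definition eta_term (t : int) (s l : nat) : R :=
  (\prod_(1 <= m < s) (1 + a ^+ (m * l))) * a ^ (- (l%:Z * t)).

Lemma root1_unit : a \is a GRing.unit.
Proof.
have k_gt0 : (0 < k)%N by case: k k_odd.
by rewrite -(unitrX_pos _ k_gt0) ak1 unitr1.
Qed.

Lemma exprz_shift (t : int) (s l j : nat) :
  a ^ (- (l%:Z * (t - j%:Z * s%:Z))) = a ^ (- (l%:Z * t)) * (a ^+ (s * l)) ^+ j.
Proof.
have -> : - (l%:Z * (t - j%:Z * s%:Z)) = - (l%:Z * t) + (s * l * j)%N%:Z.
  by rewrite !PoszM; ring.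
by rewrite exprzDr ?root1_unit // -exprM.
Qed.

Lemma eta_term_alt_sum (t : int) (s l : nat) : (0 < s)%N ->
  \sum_(j < k) (-1) ^+ j * eta_term (t - j%:Z * s%:Z) s.+1 l = 2 * eta_term t s l.
Proof.
move=> s_gt0; rewrite /eta_term big_nat_recr //=.
set P := \prod_(1 <= m < s) _; set x := a ^+ (s * l); set A := a ^ _.
have xk1 : x ^+ k = 1 by rewrite -exprM mulnC exprM ak1 expr1n.
rewrite -(alt_geom_sum_root1 k_odd xk1) [RHS]mulrC [RHS]mulrA big_distrr /=.
by apply: eq_bigr => j _; rewrite exprz_shift -/A -/x; ring.
Qed.

End AlternatingSumOfTerms.

Lemma cos_sin_exprn (R : realType) (x : R) (n : nat) :
  ((cos x) +i* (sin x)) ^+ n = (cos (x *+ n)) +i* (sin (x *+ n)).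
Proof.
elim: n => [|n IHn]; first by rewrite !mulr0n cos0 sin0.
by rewrite exprS IHn mulrS cosD sinD [LHS]/GRing.mul /=; congr (_ +i* _); ring.
Qed.

Lemma alpha_exprk (R : realType) (k : nat) : (0 < k)%N -> alpha R k ^+ k = 1.
Proof.
move=> k_gt0; rewrite /alpha cos_sin_exprn.
have -> : 2 * pi / k%:R *+ k = pi *+ 2 :> R.
  by rewrite -mulr_natr mulfVK ?pnatr_eq0 -?lt0n // mulr_natl.
by rewrite cos2pi sin2pi.
Qed.

Lemma etakE (R : realType) (k : nat) (t : int) (s : nat) :
  etak R k t s = k%:R^-1 * \sum_(l < k) eta_term (alpha R k) t s l.
Proof. by []. Qed.

Lemma etak_alt_sum (R : realType) (k s : nat) (t : int) : odd k -> (0 < s)%N ->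
  \sum_(j < k) (-1) ^+ j * etak R k (t - j%:Z * s%:Z) s.+1 = 2 * etak R k t s.
Proof.
move=> k_odd s_gt0.
have k_gt0 : (0 < k)%N by case: k k_odd.
have ak1 := alpha_exprk R k_gt0.
under eq_bigr => j _ do rewrite etakE mulrCA big_distrr /=.
rewrite -big_distrr /= exchange_big /=.
under eq_bigr => l _ do rewrite (eta_term_alt_sum k_odd ak1 _ _ s_gt0).
by rewrite -big_distrr /= mulrCA [in RHS]etakE.
Qed.

Theorem theorem3p6 (R : realType) (k s : nat) (t : int) :
  odd k -> (0 < s)%N ->
  etak R k t s =
  2^-1 * \sum_(j < k) (-1) ^+ j * etak R k (t - j%:Z * s%:Z) s.+1.
Proof. by move=> k_odd s_gt0; rewrite etak_alt_sum // mulKf ?pnatr_eq0. Qed.
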